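(* Let $C$ and $D$ be reflexive symmetric cycles of lengths $m$ and $n$ respectively, with $4 \leq n \leq m$. For an integer $w$, let $\mathrm{Hom}_w(C,D)$ be the subgraph of $\mathrm{Hom}(C,D)$ induced by the homomorphisms of wind $w$. Then $\mathrm{Hom}_w(C,D)$ consists of (1) a single component if $0 \leq |w| < m/n$; (2) $n$ isolated vertices if $0 < |w| = m/n$; and $\mathrm{Hom}_w(C,D)$ is empty if $m/n < |w|$.
   Context: A digraph is a binary relation $\to$ on a finite vertex set; $uv$ is an arc if $u \to v$, the arc $uu$ is a loop, and a digraph is reflexive if every vertex has a loop. A cycle of length $m\ge 3$ is written $C = c_0c_1\dots c_{m-1}c_0$ (indices mod $m$), its edges being the pairs $c_ic_{i+1}$; it is symmetric if $c_i \to c_{i+1}$ and $c_{i+1}\to c_i$ for every $i$. The cycle $D$ of length $n$ is written $D=(0)(1)\dots(n-1)(0)$, its vertices being the integers mod $n$. A homomorphism $\phi: C \to D$ is a map on vertices with $u \to v$ implying $\phi(u)\to\phi(v)$. $\mathrm{Hom}(C,D)$ is the digraph whose vertices are the homomorphisms $C\to D$, with $\phi \to \phi'$ iff for all $u \to v$ in $C$, $\phi(u) \to \phi'(v)$; components are components of its underlying graph (two maps adjacent if $\phi\to\phi'$ or $\phi'\to\phi$). Under $\phi$, the edge $c_ic_{i+1}$ is increasing, stationary or decreasing according as $\phi(c_{i+1}) - \phi(c_i)$ is $1$, $0$ or $-1$ (mod $n$). The increase of $\phi$ is the number of increasing edges minus the number of decreasing edges, and the wind of $\phi$ is its increase divided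 by $n$. *)

From mathcomp Require Import all_boot all_order all_algebra.
Set Implicit Arguments. Unset Strict Implicit. Unset Printing Implicit Defensive.
Import Order.TTheory GRing.Theory Num.Theory.

Definition cyc_arc (k : nat) (u v : 'I_k) : bool :=
  [|| v == u, v == ordS u | u == ordS v].

Definition is_hom (m n : nat) (f : {ffun 'I_m -> 'I_n}) : bool :=
  [forall u, forall v, cyc_arc u v ==> cyc_arc (f u) (f v)].

Definition hom_arc (m n : nat) (f g : {ffun 'I_m -> 'I_n}) : bool :=
  [forall u, forall v, cyc_arc u v ==> cyc_arc (f u) (g v)].

Definition hom_adj (m n : nat) (f g : {ffun 'I_m -> 'I_n}) : bool :=
  hom_arc f g || hom_arc g f.

Definition increase (m n : nat) (f : {ffun 'I_m -> 'I_n}) : int :=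
  (#|[set i : 'I_m | f (ordS i) == ordS (f i)]|%:Z
   - #|[set i : 'I_m | f i == ordS (f (ordS i))]|%:Z)%R.

Definition wind (m n : nat) (f : {ffun 'I_m -> 'I_n}) : rat :=
  ((increase f)%:~R / n%:R)%R.

Definition Homw (m n : nat) (w : int) : {set {ffun 'I_m -> 'I_n}} :=
  [set f | is_hom f & wind f == (w%:~R)%R].

Definition Homw_adj (m n : nat) (w : int) : rel {ffun 'I_m -> 'I_n} :=
  fun f g => [&& f \in Homw m n w, g \in Homw m n w & hom_adj f g].

(* Through the covering Z -> D, a homomorphism C -> D lifts to an integer walk
   F with steps in {-1, 0, 1} and F m - F 0 = (wind) n, and maps are adjacent
   when they lift to walks staying within distance 1 of each other.  Hence
   |w| n <= m.  If |w| n = m every step is forced: the maps are the n maps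
   c_k |-> a + k sign(w), and on a cycle of length n >= 4 no two of them are
   adjacent.  If |w| n < m, two walks with the same ends are joined by
   repeatedly lowering the first one where it is furthest above the second,
   and a walk with a stationary step is shifted up by one by raising both of
   its ends, which lie over the same vertex c_0. *)

From mathcomp Require Import all_boot all_order all_algebra.
From mathcomp Require Import zify ring.
Set Implicit Arguments. Unset Strict Implicit. Unset Printing Implicit Defensive.
Import Order.TTheory GRing.Theory Num.Theory.

Local Open Scope ring_scope.

Section IntRatio.
Variables (R : numFieldType) (a : int) (m n : nat).
Hypothesis n_gt0 : (0 < n)%N.

Lemma ltr_int_ratio : (a%:~R < m%:R / n%:R :> R) = (a * n%:Z < m%:Z).
Proof. by rewrite ltr_pdivlMr ?ltr0n // !pmulrn -intrM ltr_int. Qed.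

Lemma gtr_int_ratio : (m%:R / n%:R < a%:~R :> R) = (m%:Z < a * n%:Z).
Proof. by rewrite ltr_pdivrMr ?ltr0n // !pmulrn -intrM ltr_int. Qed.

Lemma eqr_int_ratio : (a%:~R == m%:R / n%:R :> R) = (a * n%:Z == m%:Z).
Proof.
rewrite -[a%:~R]divr1 eqr_div ?oner_neq0 ?pnatr_eq0 -?lt0n // mulr1.
by rewrite !pmulrn -intrM eqr_int.
Qed.

End IntRatio.

Lemma dvdz_small_eq0 (n : nat) (z : int) : (n %| z)%Z -> `|z| < n%:Z -> z = 0.
Proof.
rewrite dvdzE => dvd_nz lt_zn; apply/eqP; rewrite -absz_eq0.
by apply: contraTT lt_zn; rewrite -lt0n => /dvdn_leq/(_ dvd_nz); lia.
Qed.

Section OrdOfInt.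
Variable n : nat.
Hypothesis n_gt0 : (0 < n)%N.

Let n_neq0 : n%:Z != 0. Proof. by rewrite eqz_nat -lt0n. Qed.

Lemma absz_modz_lt (x : int) : (absz (x %% n)%Z < n)%N.
Proof.
have := ltz_pmod x (n_gt0 : 0 < n%:Z); have := modz_ge0 x n_neq0; lia.
Qed.

Definition ordz (x : int) : 'I_n := Ordinal (absz_modz_lt x).

Lemma eq_ordz x y : (ordz x == ordz y) = (n %| x - y)%Z.
Proof.
rewrite -eqz_mod_dvd -val_eqE /=.
by have := modz_ge0 x n_neq0; have := modz_ge0 y n_neq0; lia.
Qed.

Lemma ordz_nat (i : 'I_n) : ordz i = i.
Proof. by apply: val_inj; rewrite /= modz_nat modn_small. Qed.

Lemma ordS_ordz x : ordS (ordz x) = ordz (x + 1).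
Proof.
apply/eqP; rewrite -(ordz_nat (ordS _)) eq_ordz /= -modz_nat -addn1 PoszD.
by rewrite gez0_abs ?modz_ge0 // -eqz_mod_dvd modz_mod modzDml.
Qed.

Lemma cyc_arc_ordz x y :
  cyc_arc (ordz x) (ordz y) = [|| n %| y - x, n %| y - x - 1 | n %| y - x + 1]%Z.
Proof.
rewrite /cyc_arc !ordS_ordz !eq_ordz.
have -> : x - (y + 1) = - (y - x + 1) by ring.
by rewrite rpredN opprD addrA.
Qed.

Lemma cyc_arc_ordz_near x y : `|y - x| <= 1 -> cyc_arc (ordz x) (ordz y).
Proof.
move=> near_xy; rewrite cyc_arc_ordz.
have : [|| y - x == 0, y - x - 1 == 0 | y - x + 1 == 0] by lia.
by case/or3P => /eqP ->; rewrite dvdz0 ?orbT.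
Qed.

Section ThreeOrMore.
Hypothesis n_gt2 : (2 < n)%N.

Lemma ordz_succ_near x y : `|y - x| <= 1 -> (ordz y == ordS (ordz x)) = (y - x == 1).
Proof.
move=> near_xy; rewrite ordS_ordz eq_ordz.
apply/idP/eqP => [dvd_n|]; last by move=> e; rewrite (_ : y - (x + 1) = 0) ?dvdz0 //; lia.
by have := dvdz_small_eq0 dvd_n; lia.
Qed.

Lemma ordz_pred_near x y : `|y - x| <= 1 -> (ordz x == ordS (ordz y)) = (y - x == -1).
Proof. by rewrite distrC => /ordz_succ_near ->; apply/eqP/eqP; lia. Qed.

End ThreeOrMore.

Lemma cyc_arc_ordzP x y :
  cyc_arc (ordz x) (ordz y) -> exists2 e : int, `|e| <= 1 & (n %| y - x + e)%Z.
Proof.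
rewrite cyc_arc_ordz => /or3P[dvd_yx | dvd_yx | dvd_yx].
- by exists 0; rewrite ?addr0.
- by exists (-1).
- by exists 1.
Qed.

Section FourOrMore.
Hypothesis n_gt3 : (3 < n)%N.

Lemma cyc_arc_ordz_shift x y (s : int) : `|s| = 1 ->
  cyc_arc (ordz x) (ordz y) -> cyc_arc (ordz x) (ordz (y + s)) ->
  cyc_arc (ordz (x + s)) (ordz y) -> ordz x = ordz y.
Proof.
move=> s_unit /cyc_arc_ordzP[e0 e0_le dvd0] /cyc_arc_ordzP[e1 e1_le dvd1].
move=> /cyc_arc_ordzP[e2 e2_le dvd2].
have /dvdz_small_eq0 eq1 := rpredB dvd1 dvd0.
have /dvdz_small_eq0 eq2 := rpredB dvd2 dvd0.
have e0_0 : e0 = 0 by have := eq1 ltac:(lia); have := eq2 ltac:(lia); lia.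
by apply/eqP; rewrite eq_ordz -opprB rpredN; move: dvd0; rewrite e0_0 addr0.
Qed.

End FourOrMore.

End OrdOfInt.

Lemma card_set_sumz (T : finType) (P : pred T) :
  #|[set i | P i]|%:Z = \sum_(i : T) (if P i then 1 else 0).
Proof.
rewrite -sum1_card (big_morph Posz PoszD erefl) big_mkcond /=.
by apply: eq_bigr => i _; rewrite inE.
Qed.

Section Walks.
Variables n m : nat.
Hypotheses (n_gt2 : (2 < n)%N) (m_gt0 : (0 < m)%N).

Let n_gt0 : (0 < n)%N := ltnW (ltnW n_gt2).
Local Notation ordz := (ordz n_gt0).

(* A walk is indexed by 0..m, and both F 0 and F m lie over c_0. *)
Definition walk (F : nat -> int) := forall i, (i < m)%N -> `|F i.+1 - F i| <= 1.
Definition closes (F : nat -> int) := (n %| F m - F 0%N)%Z.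
Definition wrap (F : nat -> int) : {ffun 'I_m -> 'I_n} := [ffun i : 'I_m => ordz (F i)].

Lemma wrap_ordS F (i : 'I_m) : closes F -> wrap F (ordS i) = ordz (F i.+1).
Proof.
move=> closesF; rewrite !ffunE /=.
have := ltn_ord i; rewrite leq_eqVlt => /predU1P[->|lt_i1m]; last by rewrite modn_small.
by rewrite modnn; apply/eqP; rewrite eq_ordz -opprB rpredN.
Qed.

Lemma hom_arc_wrap F G : closes F -> closes G ->
  (forall i, (i < m)%N ->
     [/\ `|G i - F i| <= 1, `|G i.+1 - F i| <= 1 & `|G i - F i.+1| <= 1]) ->
  hom_arc (wrap F) (wrap G).
Proof.
move=> closesF closesG near_FG; apply/forallP => u; apply/forallP => v; apply/implyP.
have [near_u near_uS _] := near_FG u (ltn_ord u).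
have [_ _ near_vS] := near_FG v (ltn_ord v).
by case/or3P => /eqP->; rewrite ?wrap_ordS // !ffunE; apply: cyc_arc_ordz_near.
Qed.

Lemma is_hom_wrap F : walk F -> closes F -> is_hom (wrap F).
Proof.
move=> walkF closesF; apply: hom_arc_wrap => // i lt_im.
by rewrite subrr (distrC (F i)) walkF.
Qed.

Lemma increase_wrap F : walk F -> closes F -> increase (wrap F) = F m - F 0%N.
Proof.
move=> walkF closesF; rewrite /increase !card_set_sumz -sumrB.
rewrite -(telescope_sumr F (leq0n m)) big_mkord; apply: eq_bigr => i _.
have near_i := walkF i (ltn_ord i).
rewrite !wrap_ordS // !ffunE ordz_succ_near ?ordz_pred_near //.
by case: eqP; case: eqP; lia.
Qed.

Lemma walk_dist F : walk F -> forall j k, (k <= j <= m)%N -> `|F j - F k| <= (j - k)%N.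
Proof.
move=> walkF; elim=> [|j IH] k /andP[le_kj le_jm].
  by move: le_kj; rewrite leqn0 => /eqP->; rewrite subrr.
move: le_kj; rewrite leq_eqVlt => /predU1P[->|lt_kj1]; first by rewrite subrr subnn.
have := IH k; rewrite -ltnS lt_kj1 (ltnW le_jm) => /(_ isT).
have := walkF j le_jm; lia.
Qed.

Lemma walk_tight F (s : int) : walk F -> `|s| = 1 -> F m - F 0%N = s * m%:Z ->
  forall k, (k <= m)%N -> F k = F 0%N + s * k%:Z.
Proof.
move=> walkF s_unit wF k le_km.
have := walk_dist walkF (j := k) (k := 0) le_km.
have := walk_dist walkF (j := m) (k := k); rewrite le_km leqnn subn0 => /(_ isT).
move: wF; have [->|->] : s = 1 \/ s = -1 by lia.
all: lia.
Qed.

Definition c0 : 'I_m := Ordinal m_gt0.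

Definition hom_step (f : {ffun 'I_m -> 'I_n}) (i : 'I_m) : int :=
  if f (ordS i) == ordS (f i) then 1 else if f i == ordS (f (ordS i)) then -1 else 0.

Definition unwrap (f : {ffun 'I_m -> 'I_n}) (k : nat) : int :=
  (f c0)%:Z + \sum_(i < m | (i < k)%N) hom_step f i.

Lemma ordz_add_hom_step f i x :
  is_hom f -> ordz x = f i -> ordz (x + hom_step f i) = f (ordS i).
Proof.
move=> homf fi; rewrite /hom_step.
case: ifP => [/eqP->|not_succ]; first by rewrite -ordS_ordz fi.
case: ifP => [/eqP f_pred|not_pred].
  by apply: ordS_inj; rewrite -f_pred ordS_ordz -fi addrNK.
have : cyc_arc (f i) (f (ordS i)).
  by move/forallP/(_ i)/forallP/(_ (ordS i))/implyP: homf; apply; rewrite /cyc_arc eqxx orbT.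
by rewrite /cyc_arc not_succ not_pred !orbF => /eqP->; rewrite addr0.
Qed.

Lemma unwrap0 f : unwrap f 0 = f c0.
Proof. by rewrite /unwrap big_pred0 ?addr0. Qed.

Lemma unwrapS f k (lt_km : (k < m)%N) :
  unwrap f k.+1 = unwrap f k + hom_step f (Ordinal lt_km).
Proof.
rewrite /unwrap -addrA (bigD1 (Ordinal lt_km)) //= [_ + hom_step _ _]addrC.
congr (_ + (_ + _)); apply: eq_bigl => i; rewrite ltnS -val_eqE /= andbC.
by case: ltngtP.
Qed.

Lemma walk_unwrap f : walk (unwrap f).
Proof.
move=> i lt_im; rewrite unwrapS addrC addKr /hom_step.
by case: ifP => _ //; case: ifP.
Qed.

Lemma ordz_unwrap f : is_hom f ->
  forall k (lt_km : (k < m)%N), ordz (unwrap f k) = f (Ordinal lt_km).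
Proof.
move=> homf; elim=> [|k IH] lt_km.
  by rewrite unwrap0 ordz_nat; congr (f _); apply: val_inj.
have lt_km' := ltnW lt_km.
rewrite (unwrapS _ lt_km') (ordz_add_hom_step homf (IH lt_km')).
by congr (f _); apply: val_inj; rewrite /= modn_small.
Qed.

Lemma closes_unwrap f : is_hom f -> closes (unwrap f).
Proof.
move=> homf; have lt_m1m : (m.-1 < m)%N by rewrite prednK.
rewrite /closes; have -> : unwrap f m = unwrap f m.-1.+1 by rewrite prednK.
rewrite -(eq_ordz n_gt0) (unwrapS _ lt_m1m).
rewrite (ordz_add_hom_step homf (ordz_unwrap homf lt_m1m)) unwrap0 ordz_nat.
by apply/eqP; congr (f _); apply: val_inj; rewrite /= prednK // modnn.
Qed.

Lemma wrap_unwrap f : is_hom f -> wrap (unwrap f) = f.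
Proof.
move=> homf; apply/ffunP => i; rewrite ffunE (ordz_unwrap homf (ltn_ord i)).
by congr (f _); apply: val_inj.
Qed.

Variable w : int.

Lemma eq_wind (f : {ffun 'I_m -> 'I_n}) : (wind f == w%:~R) = (increase f == w * n%:Z).
Proof.
rewrite /wind -[w%:~R]divr1 eqr_div ?oner_neq0 ?pnatr_eq0 -?lt0n // mulr1.
by rewrite pmulrn -intrM eqr_int.
Qed.

Lemma mem_Homw_wrap F : walk F -> F m - F 0%N = w * n%:Z -> wrap F \in Homw m n w.
Proof.
move=> walkF wF; have closesF : closes F by rewrite /closes wF dvdz_mull.
by rewrite inE is_hom_wrap //= eq_wind increase_wrap // wF.
Qed.

Lemma Homw_unwrap f : f \in Homw m n w ->
  [/\ walk (unwrap f), unwrap f m - unwrap f 0%N = w * n%:Z & wrap (unwrap f) = f].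
Proof.
rewrite inE eq_wind => /andP[homf /eqP <-].
have walkF := walk_unwrap f; have wrapF := wrap_unwrap homf.
by split=> //; rewrite -[in RHS]wrapF increase_wrap ?closes_unwrap.
Qed.

Lemma Homw_bound f : f \in Homw m n w -> `|w * n%:Z| <= m%:Z.
Proof.
case/Homw_unwrap => walkF <- _.
by have := walk_dist walkF (j := m) (k := 0) (leqnn m); rewrite subn0.
Qed.

Lemma hom_arc_wrap_isolated F G : walk F -> walk G -> closes F -> closes G ->
  (forall i, (i <= m)%N -> `|G i - F i| <= 1) ->
  (forall i, (i < m)%N -> F i = G i \/ F i.+1 = G i.+1) ->
  hom_arc (wrap F) (wrap G).
Proof.
move=> walkF walkG closesF closesG near_FG isolated.
apply: hom_arc_wrap => // i lt_im.
have := near_FG i (ltnW lt_im); have := near_FG i.+1 lt_im.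
have := walkF i lt_im; have := walkG i lt_im.
by case: (isolated i lt_im) => eq_i; split; lia.
Qed.

Definition l1dist (F G : nat -> int) : nat := \sum_(i < m.+1) absz (F i - G i).

Lemma l1distC F G : l1dist F G = l1dist G F.
Proof. by apply: eq_bigr => i _; rewrite -abszN opprB. Qed.

Lemma walk_lower F G : walk F -> walk G -> closes F -> F 0%N = G 0%N -> F m = G m ->
  (exists2 u, (u <= m)%N & G u < F u) ->
  exists F', [/\ walk F', F' 0%N = F 0%N, F' m = F m, (l1dist F' G < l1dist F G)%N
               & hom_arc (wrap F) (wrap F')].
Proof.
move=> walkF walkG closesF eq0 eqm [u0 le_u0m lt_u0].
(* At a point u where F - G is maximal and, among those, F is highest, F has a
   local maximum, so it can be lowered there while staying a walk. *)
have [u1 _ max_u1] := @arg_maxP _ _ _ ord0 xpredT (fun i : 'I_m.+1 => F i - G i) isT.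
set D := F u1 - G u1 in max_u1.
have le_D v : (v <= m)%N -> F v - G v <= D.
  by move=> le_vm; exact: (max_u1 (Ordinal (le_vm : (v < m.+1)%N))).
have [u /eqP Du max_u] := @arg_maxP _ _ _ u1
  [pred i : 'I_m.+1 | F i - G i == D] (fun i : 'I_m.+1 => F i) (eqxx _).
have D_gt0 : 0 < D by have := le_D u0 le_u0m; lia.
have u_gt0 : (0 < u)%N by rewrite lt0n; apply/eqP => u_0; move: Du; rewrite u_0 eq0; lia.
have lt_um : (u < m)%N.
  by rewrite ltn_neqAle -ltnS ltn_ord andbT; apply/eqP => um; move: Du; rewrite um eqm; lia.
have below v : (v <= m)%N -> `|F v - F u| <= 1 -> `|G v - G u| <= 1 -> F v <= F u.
  move=> le_vm nearF nearG; rewrite leNgt; apply/negP => lt_uv.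
  have Dv : F v - G v == D by have := le_D v le_vm; lia.
  by have := max_u (Ordinal (le_vm : (v < m.+1)%N)) Dv; rewrite /= leNgt lt_uv.
pose F' (k : nat) := if k == u then F u - 1 else F k.
have walkF' : walk F'.
  move=> i lt_im; rewrite /F'.
  have nearF := walkF i lt_im; have nearG := walkG i lt_im.
  case: (eqVneq i u) => [e_iu|ne_iu]; case: (eqVneq i.+1 u) => [e_i1u|ne_i1u].
  - lia.
  - rewrite e_iu in nearF nearG *; have := below u.+1 lt_um nearF nearG; lia.
  - rewrite e_i1u distrC in nearF; rewrite e_i1u distrC in nearG.
    have := below i (ltnW lt_im) nearF nearG; lia.
  - exact: nearF.
have F'_out (k : nat) : k != u -> F' k = F k by rewrite /F' => /negbTE->.
have eq0' : F' 0%N = F 0%N by rewrite F'_out // eq_sym -lt0n.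
have eqm' : F' m = F m by rewrite F'_out // gtn_eqF.
exists F'; split => //.
- rewrite /l1dist (bigD1 u) //= [X in (_ < X)%N](bigD1 u) //=.
  rewrite (eq_bigr (fun i : 'I_m.+1 => absz (F i - G i))) => [|i ne_iu]; last first.
    by rewrite F'_out.
  by rewrite ltn_add2r /F' eqxx; lia.
- apply: hom_arc_wrap_isolated => //.
  + by rewrite /closes eq0' eqm'.
  + by move=> i _; rewrite /F'; case: eqP => [->|_]; lia.
  + move=> i _; case: (eqVneq i u) => [e_iu|ne_iu]; last by left; rewrite F'_out.
    by right; rewrite F'_out // e_iu gtn_eqF.
Qed.

Lemma Homw_adj_sym : symmetric (@Homw_adj m n w).
Proof. by move=> f g; rewrite /Homw_adj /hom_adj andbCA orbC. Qed.

Lemma Homw_adj_wrap F G : walk F -> walk G ->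
  F m - F 0%N = w * n%:Z -> G m - G 0%N = w * n%:Z ->
  hom_arc (wrap F) (wrap G) -> @Homw_adj m n w (wrap F) (wrap G).
Proof.
by move=> walkF walkG wF wG arcFG; rewrite /Homw_adj !mem_Homw_wrap // /hom_adj arcFG.
Qed.

Lemma connect_wrap F G : walk F -> walk G -> F m - F 0%N = w * n%:Z ->
  F 0%N = G 0%N -> F m = G m -> connect (@Homw_adj m n w) (wrap F) (wrap G).
Proof.
have [k] := ubnP (l1dist F G); elim: k F G => // k IH F G lt_dk walkF walkG wF eq0 eqm.
have wG : G m - G 0%N = w * n%:Z by rewrite -eqm -eq0.
wlog [u le_um lt_u] : F G lt_dk walkF walkG wF wG eq0 eqm /
  exists2 u, (u <= m)%N & G u < F u.
  move=> lower.
  case: (boolP [forall i : 'I_m.+1, F i == G i]) => [/forallP eq_FG | /forallPn[i]].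
    suff -> : wrap F = wrap G by exact: connect0.
    by apply/ffunP => i; rewrite !ffunE (eqP (eq_FG (widen_ord (leqnSn m) i))).
  have le_im : (i <= m)%N by rewrite -ltnS.
  rewrite neq_lt => /orP[lt_i|lt_i]; last by apply: lower => //; exists i.
  rewrite (sym_connect_sym Homw_adj_sym).
  by apply: lower => //; [rewrite l1distC | exists i].
have closesF : closes F by rewrite /closes wF dvdz_mull.
have [F' [walkF' eq0' eqm' lt_d' arcFF']] :=
  walk_lower walkF walkG closesF eq0 eqm (ex_intro2 _ _ u le_um lt_u).
have wF' : F' m - F' 0%N = w * n%:Z by rewrite eq0' eqm'.
apply: connect_trans (connect1 (Homw_adj_wrap walkF walkF' wF wF' arcFF')) _.
by apply: IH; rewrite ?eq0' ?eqm' //; exact: leq_trans lt_d' lt_dk.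
Qed.

Section Components.
Hypothesis m_gt1 : (1 < m)%N.

Definition bump_ends (F : nat -> int) (k : nat) : int :=
  if (k == 0%N) || (k == m) then F k + 1 else F k.

Lemma walk_bump_ends F :
  walk F -> F 0%N <= F 1%N -> F m <= F m.-1 -> walk (bump_ends F).
Proof.
move=> walkF up0 downm i lt_im; have := walkF i lt_im; rewrite /bump_ends.
have [-> | i_gt0] := posnP i; first by rewrite /= ltn_eqF //; lia.
rewrite (ltn_eqF lt_im) /=.
have [e | _] //= := eqVneq i.+1 m.
by move: downm; rewrite -e /=; lia.
Qed.

Lemma bump_ends_diff F : bump_ends F m - bump_ends F 0%N = F m - F 0%N.
Proof.
by rewrite /bump_ends eqxx gtn_eqF ?orbT ?(ltnW m_gt1) //= opprD addrACA subrr addr0.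
Qed.

Lemma hom_arc_wrap_bump_ends F : walk F -> walk (bump_ends F) -> closes F ->
  hom_arc (wrap F) (wrap (bump_ends F)).
Proof.
move=> walkF walkB closesF; apply: hom_arc_wrap_isolated => //.
- by rewrite /closes bump_ends_diff.
- by move=> i _; rewrite /bump_ends; case: ifP; lia.
- move=> i lt_im; rewrite /bump_ends (ltn_eqF lt_im) orbF.
  by have [-> | _] := posnP i; [right; rewrite /= ltn_eqF | left].
Qed.

Section Straight.
Hypothesis wn_lt_m : `|w * n%:Z| < m%:Z.

(* Monotone from a to a + w n; the stationary step that |w n| < m leaves is put
   last if w n >= 0 and first otherwise, so that [bump_ends] applies. *)
Definition straight (a : int) (k : nat) : int :=
  a + (if 0 <= w * n%:Z then (minn k (absz (w * n%:Z)))%:Z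
       else - (minn k.-1 (absz (w * n%:Z)))%:Z).

Lemma walk_straight a : walk (straight a).
Proof. by move=> i _; rewrite /straight; case: ifP => _ /=; lia. Qed.

Lemma straight0 a : straight a 0 = a.
Proof. by rewrite /straight; case: ifP => sign_wn /=; lia. Qed.

Lemma straight_wind a : straight a m - straight a 0%N = w * n%:Z.
Proof. by rewrite /straight; case: ifP => sign_wn /=; lia. Qed.

Lemma walk_bump_straight a : walk (bump_ends (straight a)).
Proof.
apply: walk_bump_ends; first exact: walk_straight.
all: by rewrite /straight; case: ifP => sign_wn /=; lia.
Qed.

Lemma connect_straight_succ a :
  connect (@Homw_adj m n w) (wrap (straight a)) (wrap (straight (a + 1))).
Proof.
have walkB := walk_bump_straight a.
have closes_a : closes (straight a) by rewrite /closes straight_wind dvdz_mull.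
have ends_B : bump_ends (straight a) m - bump_ends (straight a) 0%N = w * n%:Z.
  by rewrite bump_ends_diff straight_wind.
apply: connect_trans (connect1 (Homw_adj_wrap _ _ _ ends_B _)) _.
- exact: walk_straight.
- exact: walkB.
- exact: straight_wind.
- exact: hom_arc_wrap_bump_ends (walk_straight a) walkB closes_a.
apply: connect_wrap => //; first exact: walk_straight.
- by rewrite /bump_ends /= !straight0.
- by move: ends_B (straight_wind (a + 1)); rewrite /bump_ends eqxx orbT /= !straight0; lia.
Qed.

Lemma connect_straight a k :
  connect (@Homw_adj m n w) (wrap (straight a)) (wrap (straight (a + k%:Z))).
Proof.
elim: k => [|k IH]; first by rewrite addr0 connect0.
by apply: connect_trans IH _; rewrite -[k.+1]addn1 PoszD addrA connect_straight_succ.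
Qed.

Lemma Homw_connect f g : f \in Homw m n w -> g \in Homw m n w ->
  connect (@Homw_adj m n w) f g.
Proof.
wlog le_fg : f g / (f c0 <= g c0)%N.
  move=> connect_le Hf Hg; have [le_fg | /ltnW le_gf] := leqP (f c0) (g c0).
    exact: connect_le.
  by rewrite (sym_connect_sym Homw_adj_sym) connect_le.
have to_straight h : h \in Homw m n w -> connect (@Homw_adj m n w) h (wrap (straight (h c0))).
  case/Homw_unwrap => walkH windH wrapH; rewrite -{1}wrapH.
  apply: connect_wrap => //; first exact: walk_straight.
  - by rewrite straight0 unwrap0.
  - move: windH (straight_wind (h c0)); rewrite straight0 unwrap0 => eH eS.
    by apply: (addIr (- (h c0 : int))); rewrite eH eS.
move=> Hf Hg; apply: connect_trans (to_straight f Hf) _.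
apply: connect_trans (_ : connect _ _ (wrap (straight (g c0)))) _.
  by rewrite -(subnK le_fg) PoszD addrC connect_straight.
by rewrite (sym_connect_sym Homw_adj_sym) to_straight.
Qed.

Lemma Homw_nonempty : Homw m n w != set0.
Proof.
apply/set0Pn; exists (wrap (straight 0)).
by apply: mem_Homw_wrap; [exact: walk_straight | exact: straight_wind].
Qed.

End Straight.

Section Tight.
Hypotheses (n_gt3 : (3 < n)%N) (wn_eq_m : `|w * n%:Z| = m%:Z).

Definition wind_sign : int := if 0 <= w then 1 else -1.
Definition line (a : int) (k : nat) : int := a + wind_sign * k%:Z.

Lemma wind_signE : w * n%:Z = wind_sign * m%:Z.
Proof. by have := n_gt0; rewrite /wind_sign; case: ifP => sign_w; lia. Qed.

Lemma wind_sign_norm : `|wind_sign| = 1.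
Proof. by rewrite /wind_sign; case: ifP. Qed.

Lemma mem_Homw_line a : wrap (line a) \in Homw m n w.
Proof.
apply: mem_Homw_wrap; last by rewrite wind_signE /line; ring.
by move=> i _; rewrite /line /wind_sign; case: ifP => _; lia.
Qed.

Lemma Homw_line f : f \in Homw m n w -> f = wrap (line (f c0)).
Proof.
case/Homw_unwrap => walkF windF wrapF.
rewrite -[in LHS]wrapF; apply/ffunP => i; rewrite !ffunE /line.
by rewrite (walk_tight walkF wind_sign_norm _ (ltnW (ltn_ord i))) ?unwrap0 // -wind_signE -windF unwrap0.
Qed.

Lemma ordz_line_arc a b : hom_arc (wrap (line a)) (wrap (line b)) -> ordz a = ordz b.
Proof.
move=> arc_ab.
have arc u v : cyc_arc u v -> cyc_arc (wrap (line a) u) (wrap (line b) v).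
  by move=> uv; move/forallP/(_ u)/forallP/(_ v)/implyP: arc_ab; apply.
pose c1 := ordS c0.
have c1E : (c1 : nat) = 1%N by rewrite /= modn_small.
have c00 : cyc_arc c0 c0 by rewrite /cyc_arc eqxx.
have c01 : cyc_arc c0 c1 by rewrite /cyc_arc eqxx orbT.
have c10 : cyc_arc c1 c0 by rewrite /cyc_arc eqxx !orbT.
have := arc _ _ c00; have := arc _ _ c01; have := arc _ _ c10.
rewrite !ffunE /line c1E /= !mulr0 !addr0 mulr1 => a10 a01 a00.
exact (cyc_arc_ordz_shift n_gt3 wind_sign_norm a00 a01 a10).
Qed.

Lemma Homw_tight : Homw m n w = [set wrap (line c) | c : 'I_n].
Proof.
apply/setP => f; apply/idP/imsetP => [Hf | [c _ ->]]; last exact: mem_Homw_line.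
by exists (f c0) => //; apply: Homw_line.
Qed.

Lemma card_Homw_tight : #|Homw m n w| = n.
Proof.
rewrite Homw_tight card_imset ?card_ord // => c c' /ffunP/(_ c0).
by rewrite !ffunE /line /= mulr0 !addr0 !ordz_nat.
Qed.

Lemma Homw_tight_adj f g : f \in Homw m n w -> g \in Homw m n w -> hom_adj f g -> f = g.
Proof.
move=> /Homw_line -> /Homw_line ->.
by case/orP => /ordz_line_arc; rewrite !ordz_nat => ->.
Qed.

End Tight.

End Components.

End Walks.
Local Close Scope ring_scope.

Theorem fact1p1 (m n : nat) (w : int) (hn : 4 <= n) (hnm : n <= m) :
  ( (`|w|%:~R < (m%:R / n%:R : rat))%R ->
      (@Homw m n w != set0) /\
      (forall f g, f \in @Homw m n w -> g \in @Homw m n w ->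
         connect (@Homw_adj m n w) f g) )
  /\
  ( ((0 < `|w|)%R /\ (`|w|%:~R = (m%:R / n%:R : rat))%R) ->
      #|@Homw m n w| = n /\
      (forall f g, f \in @Homw m n w -> g \in @Homw m n w ->
         @hom_adj m n f g -> f = g) )
  /\
  ( ((m%:R / n%:R : rat) < `|w|%:~R)%R -> @Homw m n w = set0 ).
Proof.
have n_gt2 : (2 < n)%N := ltnW hn.
have n_gt0 : (0 < n)%N := ltnW (ltnW n_gt2).
have m_gt1 : (1 < m)%N := leq_trans (ltnW n_gt2) hnm.
have m_gt0 : (0 < m)%N := ltnW m_gt1.
have norm_wn : (`|w * n%:Z| = `|w| * n%:Z)%R by rewrite normrM.
split; [|split].
- rewrite ltr_int_ratio // -norm_wn => wn_lt_m.
  by split; [apply: Homw_nonempty | apply: Homw_connect].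
- case=> _ /eqP; rewrite eqr_int_ratio // -norm_wn => /eqP wn_eq_m.
  by split; [apply: card_Homw_tight | apply: Homw_tight_adj].
- rewrite gtr_int_ratio // -norm_wn => m_lt_wn.
  apply/setP => f; rewrite in_set0; apply/negbTE/negP => Hf.
  by have := Homw_bound n_gt2 m_gt0 Hf; rewrite leNgt m_lt_wn.
Qed.
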